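(* Let $\Gamma$ be a maximal consistent set of SBTrust, and let $\varphi,\psi$ be propositional formulas with $\psi\notin\rightsquigarrow_\varphi(\Gamma)$. Then there exists a maximal consistent set $\Delta\in[\Gamma]_\leftrightsquigarrow$ such that $\{\neg\psi\}\cup\rightsquigarrow_\varphi(\Gamma)\subseteq\Delta$.
   Context: $\mathcal{L}_T$: $\alpha::=\varphi\mid\varphi\rightsquigarrow\varphi\mid B(\alpha)\mid\alpha*\alpha\mid\neg\alpha$, with $\varphi$ ranging over classical propositional formulas (built from variables, $\bot$, $\land,\lor,\to,\leftrightarrow,\neg$) and $*\in\{\land,\lor,\to,\leftrightarrow\}$. SBTrust is the Hilbert system ($\varphi,\psi,\chi,\varphi_i,\psi_i$ propositional; $\alpha,\beta\in\mathcal{L}_T$; rule outputs must lie in $\mathcal{L}_T$): classical tautologies and Modus Ponens; $\varphi\rightsquigarrow\varphi$; $(\varphi\rightsquigarrow\bot)\to\neg\varphi$; $((\psi\land\chi)\rightsquigarrow\varphi)\to(\psi\rightsquigarrow(\chi\to\varphi))$; $(\neg(\varphi\leftrightarrow\psi)\rightsquigarrow\bot)\to((\varphi\rightsquigarrow\chi)\leftrightarrow(\psi\rightsquigarrow\chi))$; rule RCK: from $(\varphi_1\land\dots\land\varphi_n)\to\varphi_{n+1}$ infer $\bigwedge_{j\le n}(\psi\rightsquigarrow\varphi_j)\to(\psi\rightsquigarrow\varphi_{n+1})$; rule $\mathbf{S5_F}$: from $(\ell_1\land\dots\land\ell_n)\to\chi$ infer $(\ell_1\land\dots\land\ell_n)\to(\neg\chi\rightsquigarrow\bot)$,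 each $\ell_j$ being $\varphi_j\rightsquigarrow\psi_j$ or its negation, $\chi$ propositional; $B(\alpha\to\beta)\to(B\alpha\to B\beta)$; $B\alpha\to\neg B\neg\alpha$; $B\alpha\to BB\alpha$; necessitation for $B$. A maximal consistent set (MCS) is $\Gamma\subseteq\mathcal{L}_T$ with $\Gamma\nvdash\bot$ and, for every $\alpha\in\mathcal{L}_T$, $\alpha\in\Gamma$ or $\neg\alpha\in\Gamma$. For $\Gamma\subseteq\mathcal{L}_T$: $\Gamma^\rightsquigarrow$ is the set of formulas of the form $\chi\rightsquigarrow\psi$ in $\Gamma$; for MCSs, $\Gamma\leftrightsquigarrow\Delta$ iff $\Gamma^\rightsquigarrow=\Delta^\rightsquigarrow$ (an equivalence relation), and $[\Gamma]_\leftrightsquigarrow$ is the equivalence class of $\Gamma$; $\rightsquigarrow_\varphi(\Gamma)=\{\psi:\varphi\rightsquigarrow\psi\in\Gamma\}$. *)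

From Stdlib Require Import List.
Import ListNotations.

Inductive pform : Type :=
| PVar : nat -> pform
| PBot : pform
| PAnd : pform -> pform -> pform
| POr  : pform -> pform -> pform
| PImp : pform -> pform -> pform
| PIff : pform -> pform -> pform
| PNeg : pform -> pform.

(* The language L_T.  Propositional formulas are embedded via [emb];
   the connectives of L_T are shared with the propositional ones, so
   L_T is exactly the type [tform] without syntactic ambiguity. *)
Inductive tform : Type :=
| TVar : nat -> tform
| TBot : tform
| TAnd : tform -> tform -> tform
| TOr  : tform -> tform -> tform
| TImp : tform -> tform -> tform
| TIff : tform -> tform -> tform
| TNeg : tform -> tform
| TTr  : pform -> pform -> tform
| TB   : tform -> tform.

Fixpoint emb (p : pform) : tform :=
  match p with
  | PVar n => TVar n
  | PBot => TBot
  | PAnd a b => TAnd (emb a) (emb b)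
  | POr a b => TOr (emb a) (emb b)
  | PImp a b => TImp (emb a) (emb b)
  | PIff a b => TIff (emb a) (emb b)
  | PNeg a => TNeg (emb a)
  end.

Fixpoint teval (vp : nat -> bool) (vt : pform -> pform -> bool)
  (vb : tform -> bool) (a : tform) : bool :=
  match a with
  | TVar n => vp n
  | TBot => false
  | TAnd x y => andb (teval vp vt vb x) (teval vp vt vb y)
  | TOr x y => orb (teval vp vt vb x) (teval vp vt vb y)
  | TImp x y => orb (negb (teval vp vt vb x)) (teval vp vt vb y)
  | TIff x y => Bool.eqb (teval vp vt vb x) (teval vp vt vb y)
  | TNeg x => negb (teval vp vt vb x)
  | TTr p q => vt p q
  | TB x => vb x
  end.

(* Instances (in L_T) of classical tautologies *)
Definition tautology (a : tform) : Prop :=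
  forall vp vt vb, teval vp vt vb a = true.

Fixpoint pconj (x : pform) (xs : list pform) : pform :=
  match xs with
  | [] => x
  | y :: ys => PAnd x (pconj y ys)
  end.

Fixpoint tconj (x : tform) (xs : list tform) : tform :=
  match xs with
  | [] => x
  | y :: ys => TAnd x (tconj y ys)
  end.

Inductive lit : Type :=
| LPos : pform -> pform -> lit
| LNeg : pform -> pform -> lit.

Definition lit_form (l : lit) : tform :=
  match l with
  | LPos p q => TTr p q
  | LNeg p q => TNeg (TTr p q)
  end.

Inductive thm : tform -> Prop :=
| ax_taut : forall a, tautology a -> thm a
| r_mp : forall a b, thm (TImp a b) -> thm a -> thm b
| ax_id : forall p, thm (TTr p p)
| ax_bot : forall p, thm (TImp (TTr p PBot) (TNeg (emb p)))
| ax_imp : forall p q c,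
    thm (TImp (TTr (PAnd q c) p) (TTr q (PImp c p)))
| ax_eq : forall p q c,
    thm (TImp (TTr (PNeg (PIff p q)) PBot) (TIff (TTr p c) (TTr q c)))
| r_rck : forall (q p1 p : pform) (ps : list pform),
    thm (emb (PImp (pconj p1 ps) p)) ->
    thm (TImp (tconj (TTr q p1) (map (TTr q) ps)) (TTr q p))
| r_s5f : forall (l1 : lit) (ls : list lit) (c : pform),
    thm (TImp (tconj (lit_form l1) (map lit_form ls)) (emb c)) ->
    thm (TImp (tconj (lit_form l1) (map lit_form ls)) (TTr (PNeg c) PBot))
| ax_K : forall a b, thm (TImp (TB (TImp a b)) (TImp (TB a) (TB b)))
| ax_D : forall a, thm (TImp (TB a) (TNeg (TB (TNeg a))))
| ax_4 : forall a, thm (TImp (TB a) (TB (TB a)))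
| r_nec : forall a, thm a -> thm (TB a).

Fixpoint imps (l : list tform) (b : tform) : tform :=
  match l with
  | [] => b
  | x :: xs => TImp x (imps xs b)
  end.

Definition derives (G : tform -> Prop) (a : tform) : Prop :=
  exists l, (forall x, In x l -> G x) /\ thm (imps l a).

Definition MCS (G : tform -> Prop) : Prop :=
  ~ derives G TBot /\ forall a, G a \/ G (TNeg a).

Definition tr_equiv (G D : tform -> Prop) : Prop :=
  forall p q, G (TTr p q) <-> D (TTr p q).

Definition tr_succ (p : pform) (G : tform -> Prop) : pform -> Prop :=
  fun q => G (TTr p q).

(* If the seed (the ~>-literals of Gamma, ~psi and ~>_phi(Gamma)) were inconsistent, finitely many
   literals L of Gamma and chi_1, ..., chi_n in ~>_phi(Gamma) would propositionally prove
   d := chi_1 -> ... -> chi_n -> psi from L.  Rule S5_F then makes ~(phi <-> phi /\ d) ~> bot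
   derivable from L, so by the replacement axiom phi ~> d is equivalent to (phi /\ d) ~> d, which
   holds by RCK.  RCK applied to phi ~> d, phi ~> chi_1, ..., phi ~> chi_n puts psi in
   ~>_phi(Gamma), a contradiction.  Any Lindenbaum extension of the seed is the required Delta:
   containing all ~>-literals of Gamma, it has exactly the ~>-formulas of Gamma. *)
From Stdlib Require Import List Bool Classical ClassicalEpsilon Cantor PeanoNat.
Import ListNotations.

Section Semantics.
Variables (vp : nat -> bool) (vt : pform -> pform -> bool) (vb : tform -> bool).
Notation V := (teval vp vt vb).

Lemma teval_imps l c :
  V (imps l c) = true <-> ((forall x, In x l -> V x = true) -> V c = true).
Proof.
  induction l as [|a l IH]; simpl.
  - intuition.
  - rewrite orb_true_iff, negb_true_iff, IH. split.
    + intros [H|H] Hall.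
      * rewrite (Hall a (or_introl eq_refl)) in H; discriminate.
      * apply H; intros; apply Hall; auto.
    + intros H. destruct (V a) eqn:E; [right|left; reflexivity].
      intros Hl; apply H; intros x [<-|Hx]; auto.
Qed.

Lemma teval_tconj x xs :
  V (tconj x xs) = true <-> V x = true /\ forall y, In y xs -> V y = true.
Proof.
  revert x; induction xs as [|y ys IH]; intros x; simpl.
  - intuition.
  - rewrite andb_true_iff, IH. split.
    + intros [H1 [H2 H3]]; split; auto. intros z [<-|Hz]; auto.
    + intros [H1 H2]; split; auto.
Qed.
End Semantics.

Fixpoint pimps (cs : list pform) (p : pform) : pform :=
  match cs with [] => p | c :: cs => PImp c (pimps cs p) end.

Lemma emb_pimps cs p : emb (pimps cs p) = imps (map emb cs) (emb p).
Proof. induction cs; simpl; congruence. Qed.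

Lemma emb_pconj x xs : emb (pconj x xs) = tconj (emb x) (map emb xs).
Proof. revert x; induction xs; intros; simpl; congruence. Qed.

Lemma thm_taut_imp a b :
  thm a -> (forall vp vt vb, teval vp vt vb a = true -> teval vp vt vb b = true) -> thm b.
Proof.
  intros Ha Hab. apply (r_mp a); [|exact Ha].
  apply ax_taut; intros vp vt vb; simpl.
  destruct (teval vp vt vb a) eqn:E; simpl; auto.
Qed.

Lemma tr_of_imp p q : thm (emb (PImp p q)) -> thm (TTr p q).
Proof. intros H. exact (r_mp _ _ (r_rck p p q [] H) (ax_id p)). Qed.

Section Derivability.
Variable G : tform -> Prop.

Lemma derives_thm a : thm a -> derives G a.
Proof. intros H; exists []; split; simpl; tauto. Qed.

Lemma derives_in a : G a -> derives G a.
Proof.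
  intros H; exists [a]; split.
  - simpl; intros x [<-|[]]; auto.
  - apply ax_taut; intros vp vt vb; simpl; destruct (teval vp vt vb a); reflexivity.
Qed.

Lemma derives_mp a b : derives G (TImp a b) -> derives G a -> derives G b.
Proof.
  intros [l1 [H1 T1]] [l2 [H2 T2]]. exists (l1 ++ l2); split.
  - intros x Hx; apply in_app_or in Hx; destruct Hx; auto.
  - refine (r_mp _ _ (r_mp _ _ (ax_taut _ _) T1) T2).
    intros vp vt vb; simpl.
    destruct (teval vp vt vb (imps l1 (TImp a b))) eqn:E1; [|reflexivity].
    destruct (teval vp vt vb (imps l2 a)) eqn:E2; [|reflexivity].
    simpl; rewrite teval_imps in *. intros Hall.
    assert (Ha : teval vp vt vb a = true)
      by (apply E2; intros; apply Hall, in_or_app; auto).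
    specialize (E1 (fun x Hx => Hall x (in_or_app _ _ _ (or_introl Hx)))).
    simpl in E1; rewrite Ha in E1; exact E1.
Qed.

Lemma derives_taut ts c :
  (forall t, In t ts -> derives G t) -> tautology (imps ts c) -> derives G c.
Proof.
  intros H Ht. assert (D : derives G (imps ts c)) by (apply derives_thm, ax_taut, Ht).
  clear Ht. induction ts as [|t ts IH]; simpl in *; auto.
  apply IH; [intros; apply H; auto|]. eapply derives_mp; eauto.
Qed.

Lemma derives_tconj x ys :
  derives G x -> (forall y, In y ys -> derives G y) -> derives G (tconj x ys).
Proof.
  revert x; induction ys as [|y ys IH]; intros x Hx Hys; simpl; auto.
  apply (derives_taut [x; tconj y ys]).
  - simpl; intros t [<-|[<-|[]]]; auto. apply IH; simpl in Hys; auto.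
  - intros vp vt vb; simpl.
    destruct (teval vp vt vb x), (teval vp vt vb (tconj y ys)); reflexivity.
Qed.

Lemma derives_ded a b : derives (fun y => G y \/ y = a) b -> derives G (TImp a b).
Proof.
  intros [l [Hl T]].
  assert (Ex : exists l', (forall x, In x l' -> G x) /\ forall x, In x l -> In x l' \/ x = a).
  { clear T. induction l as [|y l IH].
    - exists []; simpl; tauto.
    - destruct IH as [l' [H1 H2]]; [intros; apply Hl; simpl; auto|].
      destruct (Hl y (or_introl eq_refl)) as [Gy|Ey].
      + exists (y :: l'); split; simpl; [intros x [<-|Hx]; auto|].
        intros x [<-|Hx]; auto. destruct (H2 x Hx); auto.
      + exists l'; split; auto. simpl; intros x [<-|Hx]; auto. }
  destruct Ex as [l' [H1 H2]]. exists l'; split; auto.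
  apply (thm_taut_imp _ _ T). intros vp vt vb. rewrite !teval_imps. intros E Hall. simpl.
  destruct (teval vp vt vb a) eqn:Ea; simpl; auto.
  apply E. intros x Hx. destruct (H2 x Hx) as [h| ->]; auto.
Qed.

Lemma derives_bot_cases a :
  derives (fun y => G y \/ y = a) TBot -> derives (fun y => G y \/ y = TNeg a) TBot ->
  derives G TBot.
Proof.
  intros Da Dna. apply derives_ded in Da, Dna.
  apply (derives_taut [TImp a TBot; TImp (TNeg a) TBot]).
  - simpl; intros t [<-|[<-|[]]]; auto.
  - intros vp vt vb; simpl. destruct (teval vp vt vb a); reflexivity.
Qed.
End Derivability.

Lemma derives_mono (G G' : tform -> Prop) a :
  (forall x, G x -> G' x) -> derives G a -> derives G' a.
Proof. intros H [l [Hl T]]; exists l; split; auto. Qed.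

Lemma derives_singleton a b : derives (fun x => x = a) b -> thm (TImp a b).
Proof.
  intros D. apply (derives_mono _ (fun y => False \/ y = a)) in D; [|tauto].
  destruct (derives_ded _ _ _ D) as [[|x l] [Hl T]]; [exact T|].
  destruct (Hl x (or_introl eq_refl)).
Qed.

Lemma list_split_image {A B} (P : A -> Prop) (R : B -> Prop) (f : B -> A) l :
  (forall x, In x l -> P x \/ exists b, R b /\ x = f b) ->
  exists l1 bs, (forall x, In x l1 -> P x) /\ (forall b, In b bs -> R b) /\
    incl l (l1 ++ map f bs).
Proof.
  induction l as [|y l IH]; intros Hl.
  - exists [], []; repeat split; simpl; try tauto. intros x [].
  - destruct IH as [l1 [bs [H1 [H2 H3]]]]; [intros; apply Hl; simpl; auto|].
    destruct (Hl y (or_introl eq_refl)) as [Py|[b [Rb ->]]].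
    + exists (y :: l1), bs; repeat split; [intros x [<-|Hx]; auto|auto|].
      intros x [<-|Hx]; simpl; auto.
    + exists l1, (b :: bs); repeat split; [auto|intros b' [<-|Hb']; auto|].
      intros x [<-|Hx]; apply in_or_app; simpl; auto.
      destruct (in_app_or _ _ _ (H3 x Hx)); auto.
Qed.

Lemma derives_split_image {B} (f : B -> tform) (R : B -> Prop) (P : tform -> Prop) a :
  derives (fun x => P x \/ exists b, R b /\ x = f b) a ->
  exists bs, (forall b, In b bs -> R b) /\ derives P (imps (map f bs) a).
Proof.
  intros [l [Hl T]].
  destruct (list_split_image P R f l Hl) as [l1 [bs [H1 [H2 H3]]]].
  exists bs; split; auto. exists l1; split; auto.
  apply (thm_taut_imp _ _ T). intros vp vt vb. rewrite !teval_imps. intros E H1' H2'.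
  apply E. intros x Hx. destruct (in_app_or _ _ _ (H3 x Hx)); auto.
Qed.

Section Lindenbaum.
Variable enum : nat -> tform.
Hypothesis enum_surj : forall a, exists n, enum n = a.
Variable seed : tform -> Prop.
Hypothesis seed_consistent : ~ derives seed TBot.

Fixpoint chain (n : nat) : tform -> Prop :=
  match n with
  | 0 => seed
  | S n => fun x => chain n x \/
      (x = enum n /\ ~ derives (fun y => chain n y \/ y = enum n) TBot) \/
      (x = TNeg (enum n) /\ derives (fun y => chain n y \/ y = enum n) TBot)
  end.

Definition limit x := exists n, chain n x.

Lemma chain_mono n m x : n <= m -> chain n x -> chain m x.
Proof. induction 1; simpl; auto. Qed.

Lemma chain_consistent n : ~ derives (chain n) TBot.
Proof.
  induction n as [|n IH]; simpl; auto.
  destruct (classic (derives (fun y => chain n y \/ y = enum n) TBot)) as [D|D]; intros D'.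
  - apply IH, (derives_bot_cases _ (enum n) D).
    eapply derives_mono; [|exact D']. intros x [h|[[_ h]|[-> _]]]; auto; tauto.
  - apply D. eapply derives_mono; [|exact D']. intros x [h|[[-> _]|[_ h]]]; auto; tauto.
Qed.

Lemma limit_list_chain l : (forall x, In x l -> limit x) -> exists N, forall x, In x l -> chain N x.
Proof.
  induction l as [|y l IH]; intros Hl.
  - exists 0; simpl; tauto.
  - destruct IH as [N HN]; [intros; apply Hl; simpl; auto|].
    destruct (Hl y (or_introl eq_refl)) as [m Hm].
    exists (N + m). intros x [<-|Hx].
    + apply (chain_mono m); [apply Nat.le_add_l|exact Hm].
    + apply (chain_mono N); [apply Nat.le_add_r|auto].
Qed.

Lemma limit_MCS : MCS limit.
Proof.
  split.
  - intros [l [Hl T]]. destruct (limit_list_chain l Hl) as [N HN].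
    apply (chain_consistent N). exists l; auto.
  - intros a. destruct (enum_surj a) as [n <-].
    destruct (classic (derives (fun y => chain n y \/ y = enum n) TBot));
      [right|left]; exists (S n); simpl; auto.
Qed.
End Lindenbaum.

Fixpoint encp (p : pform) : nat :=
  match p with
  | PVar n => to_nat (0, n)
  | PBot => to_nat (1, 0)
  | PAnd a b => to_nat (2, to_nat (encp a, encp b))
  | POr a b => to_nat (3, to_nat (encp a, encp b))
  | PImp a b => to_nat (4, to_nat (encp a, encp b))
  | PIff a b => to_nat (5, to_nat (encp a, encp b))
  | PNeg a => to_nat (6, encp a)
  end.

Fixpoint enct (a : tform) : nat :=
  match a with
  | TVar n => to_nat (0, n)
  | TBot => to_nat (1, 0)
  | TAnd a b => to_nat (2, to_nat (enct a, enct b))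
  | TOr a b => to_nat (3, to_nat (enct a, enct b))
  | TImp a b => to_nat (4, to_nat (enct a, enct b))
  | TIff a b => to_nat (5, to_nat (enct a, enct b))
  | TNeg a => to_nat (6, enct a)
  | TTr p q => to_nat (7, to_nat (encp p, encp q))
  | TB a => to_nat (8, enct a)
  end.

Lemma to_nat_pair_inj a b c d : to_nat (a, b) = to_nat (c, d) -> a = c /\ b = d.
Proof. intros H; apply to_nat_inj in H; injection H; auto. Qed.

Ltac to_nat_inj_tac := repeat match goal with
  | H : to_nat _ = to_nat _ |- _ => apply to_nat_pair_inj in H; destruct H
  end.

Lemma encp_inj p q : encp p = encp q -> p = q.
Proof.
  revert q; induction p; intros q; destruct q; cbn [encp]; intros H; to_nat_inj_tac;
    try discriminate; subst; f_equal; auto.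
Qed.

Lemma enct_inj a b : enct a = enct b -> a = b.
Proof.
  revert b; induction a; intros b; destruct b; cbn [encp enct]; intros H; to_nat_inj_tac;
    try discriminate; subst; f_equal; auto using encp_inj.
Qed.

Lemma tform_enumerable : exists enum : nat -> tform, forall a, exists n, enum n = a.
Proof.
  exists (fun n => epsilon (inhabits TBot) (fun a => enct a = n)). intros a.
  exists (enct a). apply enct_inj.
  apply (epsilon_spec (inhabits TBot) (fun b => enct b = enct a)). exists a; reflexivity.
Qed.

Theorem lindenbaum seed :
  ~ derives seed TBot -> exists D, MCS D /\ forall x, seed x -> D x.
Proof.
  intros H. destruct tform_enumerable as [enum Henum].
  exists (limit enum seed). split; [exact (limit_MCS enum Henum seed H)|].
  intros x Hx; exists 0; exact Hx.
Qed.

Lemma mcs_derives G a : MCS G -> derives G a -> G a.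
Proof.
  intros [HC HM] D. destruct (HM a) as [h|h]; auto. exfalso; apply HC.
  apply (derives_taut _ [a; TNeg a]).
  - simpl; intros t [<-|[<-|[]]]; auto using derives_in.
  - intros vp vt vb; simpl; destruct (teval vp vt vb a); reflexivity.
Qed.

Lemma mcs_not_both G a : MCS G -> G a -> G (TNeg a) -> False.
Proof.
  intros [HC _] h1 h2. apply HC.
  apply (derives_taut _ [a; TNeg a]).
  - simpl; intros t [<-|[<-|[]]]; auto using derives_in.
  - intros vp vt vb; simpl; destruct (teval vp vt vb a); reflexivity.
Qed.

Lemma tr_equiv_of_lits G D :
  MCS G -> MCS D -> (forall k, G (lit_form k) -> D (lit_form k)) -> tr_equiv G D.
Proof.
  intros HG HD Hlits p q; split; intros h.
  - exact (Hlits (LPos p q) h).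
  - destruct (proj2 HG (TTr p q)) as [h'|h']; [exact h'|].
    destruct (mcs_not_both D _ HD h (Hlits (LNeg p q) h')).
Qed.

Lemma derives_tr_mp G q cs c :
  derives G (TTr q (pimps cs c)) -> (forall x, In x cs -> derives G (TTr q x)) ->
  derives G (TTr q c).
Proof.
  intros Hd Hcs.
  assert (Hmp : thm (emb (PImp (pconj (pimps cs c) cs) c))).
  { apply ax_taut; intros vp vt vb. simpl. rewrite emb_pconj.
    destruct (teval vp vt vb (tconj (emb (pimps cs c)) (map emb cs))) eqn:E; [|reflexivity].
    apply teval_tconj in E. destruct E as [E1 E2].
    rewrite emb_pimps, teval_imps in E1. simpl; apply E1. exact E2. }
  apply (derives_mp _ _ _ (derives_thm _ _ (r_rck q (pimps cs c) c cs Hmp))).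
  apply derives_tconj; auto.
  intros y Hy. apply in_map_iff in Hy. destruct Hy as [x [<- Hx]]; auto.
Qed.

(* Rule S5_F turns [L -> d] into [L -> (~(phi <-> phi /\ d) ~> bot)], and then the replacement
   axiom identifies phi ~> d with (phi /\ d) ~> d. *)
Lemma derives_tr_of_lits G phi l ls d :
  derives G (lit_form l) -> (forall k, In k ls -> derives G (lit_form k)) ->
  thm (TImp (tconj (lit_form l) (map lit_form ls)) (emb d)) -> derives G (TTr phi d).
Proof.
  intros Hl Hls Hd.
  set (c := PIff phi (PAnd phi d)).
  assert (Hc : thm (TImp (tconj (lit_form l) (map lit_form ls)) (emb c))).
  { apply (thm_taut_imp _ _ Hd); intros vp vt vb; simpl.
    destruct (teval vp vt vb (tconj (lit_form l) (map lit_form ls))),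
      (teval vp vt vb (emb phi)), (teval vp vt vb (emb d)); auto. }
  assert (Hbot : derives G (TTr (PNeg c) PBot)).
  { apply (derives_mp _ _ _ (derives_thm _ _ (r_s5f _ _ _ Hc))).
    apply derives_tconj; auto.
    intros y Hy. apply in_map_iff in Hy. destruct Hy as [k [<- Hk]]; auto. }
  assert (Hiff := derives_mp _ _ _ (derives_thm _ _ (ax_eq phi (PAnd phi d) d)) Hbot).
  assert (Hconj : thm (TTr (PAnd phi d) d)).
  { apply tr_of_imp, ax_taut; intros vp vt vb; simpl.
    destruct (teval vp vt vb (emb phi)), (teval vp vt vb (emb d)); reflexivity. }
  apply (derives_taut _ [TIff (TTr phi d) (TTr (PAnd phi d) d); TTr (PAnd phi d) d]).
  - simpl; intros t [<-|[<-|[]]]; auto using derives_thm.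
  - intros vp vt vb; simpl. destruct (vt phi d), (vt (PAnd phi d) d); reflexivity.
Qed.

Definition tr_seed (G : tform -> Prop) (phi psi : pform) : tform -> Prop :=
  fun x => (x = emb (PNeg psi) \/ exists k, G (lit_form k) /\ x = lit_form k) \/
           exists c, G (TTr phi c) /\ x = emb c.

Lemma tr_seed_consistent G phi psi :
  MCS G -> ~ G (TTr phi psi) -> ~ derives (tr_seed G phi psi) TBot.
Proof.
  intros HG Hpsi Hbot.
  destruct (derives_split_image emb _ _ _ Hbot) as [cs [Hcs H1]].
  destruct (derives_split_image lit_form _ _ _ H1) as [ls [Hls H2]].
  apply derives_singleton in H2.
  assert (Hd : thm (TImp (tconj (TTr phi phi) (map lit_form ls)) (emb (pimps cs psi)))).
  { apply (thm_taut_imp _ _ H2); intros vp vt vb; simpl. rewrite emb_pimps.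
    destruct (teval vp vt vb (tconj (TTr phi phi) (map lit_form ls))) eqn:E; [|reflexivity].
    apply teval_tconj in E. destruct E as [_ E].
    destruct (teval vp vt vb (emb psi)) eqn:Epsi; simpl.
    - intros _. apply teval_imps; auto.
    - rewrite !teval_imps. intros H Hcs'. discriminate (H E Hcs'). }
  apply Hpsi, mcs_derives; [exact HG|].
  apply (derives_tr_mp _ phi cs psi).
  - exact (derives_tr_of_lits _ phi (LPos phi phi) ls _ (derives_thm _ _ (ax_id phi))
             (fun k Hk => derives_in _ _ (Hls k Hk)) Hd).
  - intros c Hc. exact (derives_in _ _ (Hcs c Hc)).
Qed.

Theorem lemma1 (G : tform -> Prop) (phi psi : pform) :
  MCS G -> ~ tr_succ phi G psi ->
  exists D : tform -> Prop,
    MCS D /\ tr_equiv G D /\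
    D (emb (PNeg psi)) /\
    (forall chi, tr_succ phi G chi -> D (emb chi)).
Proof.
  intros HG Hpsi.
  destruct (lindenbaum _ (tr_seed_consistent G phi psi HG Hpsi)) as [D [HD Hseed]].
  exists D. split; [exact HD|]. split; [|split].
  - apply tr_equiv_of_lits; auto.
    intros k Hk. apply Hseed. left; right; exists k; auto.
  - apply Hseed. left; left; reflexivity.
  - intros chi Hchi. apply Hseed. right; exists chi; auto.
Qed.
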